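(* Let $A$ be an $m\times n$ matrix with entries in $[-1,1]$, no zero column, and at most $L$ nonzero entries in each row, and let $H$ be the smallest absolute value of a nonzero entry of $A$. Then the expected shuffle size of DIMSUM with parameter $\gamma$ (the expected total number of emissions) is at most $\gamma\, n L/H^2$; in particular it is $O(nL\gamma/H^2)$, independent of $m$.
   Context: Let $A=(a_{ki})$ be an $m\times n$ real matrix with rows $r_1,\dots,r_m$ and columns $c_1,\dots,c_n$; $\|c_i\|$ is the Euclidean norm of column $i$ (assumed nonzero). DIMSUM with parameter $\gamma>0$ is the following randomized procedure. For each pair of distinct column indices $(i,j)$ set $p_{ij}=\min\!\left(1,\frac{\gamma}{\|c_i\|\|c_j\|}\right)$. For each row $k$ and each pair $(i,j)$ with $a_{ki}a_{kj}\neq 0$, independently (over all $k$ and all pairs) with probability $p_{ij}$ the value $a_{ki}a_{kj}$ is emitted to key $(i,j)$ (one ''emission''). The shuffle size is the total number of emissions. *)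

From HB Require Import structures.
From mathcomp Require Import all_boot all_order all_algebra.
Set Implicit Arguments. Unset Strict Implicit. Unset Printing Implicit Defensive.
Import Order.TTheory GRing.Theory Num.Theory.
Local Open Scope ring_scope.

Section DIMSUM.
Variables (R : rcfType) (m n : nat).

Definition colnorm (A : 'M[R]_(m, n)) (i : 'I_n) : R :=
  Num.sqrt (\sum_(k < m) A k i ^+ 2).

Definition dimsum_p (gamma : R) (A : 'M[R]_(m, n)) (i j : 'I_n) : R :=
  Num.min 1 (gamma / (colnorm A i * colnorm A j)).

(* A potential emission: row k, ordered pair (i,j) of distinct columns,
   with a_ki a_kj <> 0. *)
Definition eligible (A : 'M[R]_(m, n)) (t : 'I_m * 'I_n * 'I_n) : bool :=
  let: (k, i, j) := t in (i != j) && (A k i * A k j != 0).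

(* An outcome of the randomized procedure: for each triple (k,i,j),
   whether the value a_ki a_kj was emitted to key (i,j). *)
Definition outcome := {ffun 'I_m * 'I_n * 'I_n -> bool}.

(* Probability of an outcome: independent Bernoulli(p_ij) coins for the
   eligible triples; ineligible triples never emit. *)
Definition outcome_prob (gamma : R) (A : 'M[R]_(m, n)) (w : outcome) : R :=
  \prod_(t : 'I_m * 'I_n * 'I_n)
    (if eligible A t then
       (let: (_, i, j) := t in
        if w t then dimsum_p gamma A i j else 1 - dimsum_p gamma A i j)
     else (if w t then 0 else 1)).

Definition shuffle_size (A : 'M[R]_(m, n)) (w : outcome) : nat :=
  #|[set t | eligible A t && w t]|.

Definition expected_shuffle_size (gamma : R) (A : 'M[R]_(m, n)) : R :=
  \sum_(w : outcome) outcome_prob gamma A w * (shuffle_size A w)%:R.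

End DIMSUM.

From HB Require Import structures.
From mathcomp Require Import all_boot all_order all_algebra.
From mathcomp Require Import lra.
Import Order.TTheory GRing.Theory Num.Theory.
Local Open Scope ring_scope.
Set Implicit Arguments. Unset Strict Implicit.

(* 1. Linearity of expectation for independent coins: under a product of
      distributions on bool, the expectation of the indicator of one coin is
      its success probability.  Hence the expected shuffle size is the sum,
      over eligible triples (k,i,j), of the emission probability p_ij.
   2. AM-GM: p_ij <= gamma/(|c_i||c_j|) <= gamma/2 (|c_i|^-2 + |c_j|^-2); by
      the symmetry of eligibility in (i,j) the two halves contribute equally,
      so the expectation is at most gamma \sum_i N_i / |c_i|^2, where N_i
      counts the eligible triples (k,i,j) with first column i.
   3. Counting: each nonzero a_ki gives at most L eligible triples (row
      sparsity), so N_i <= L s_i with s_i the number of nonzeros of column i;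
      and every such nonzero has a_ki^2 >= H^2, so |c_i|^2 >= H^2 s_i.
      Thus N_i / |c_i|^2 <= L / H^2 and summing over the n columns concludes.
   The bound [-1,1] on the entries is not needed. *)

Section ProductOfCoins.
Variables (R : comNzRingType) (I : finType) (f : I -> bool -> R).
Hypothesis f_sum1 : forall s, f s true + f s false = 1.

Lemma product_marginal (t : I) (g : bool -> R) :
  \sum_(w : {ffun I -> bool}) (\prod_s f s (w s)) * g (w t)
    = f t true * g true + f t false * g false.
Proof.
pose F s b := f s b * (if s == t then g b else 1).
have prodF (w : {ffun I -> bool}) :
    \prod_s F s (w s) = (\prod_s f s (w s)) * g (w t).
  rewrite big_split /= [X in _ * X](bigD1 t) //= eqxx [X in _ * (_ * X)]big1 ?mulr1 //.
  by move=> s /negPf ->.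
under eq_bigr do rewrite -prodF.
rewrite -(bigA_distr_bigA F) (bigD1 t) //= [X in _ * X]big1 ?mulr1.
  by rewrite big_bool /F eqxx.
by move=> s /negPf s_t; rewrite big_bool /F s_t /= !mulr1 f_sum1.
Qed.

Lemma product_coin_expectation (t : I) :
  \sum_(w : {ffun I -> bool}) (\prod_s f s (w s)) * (w t)%:R = f t true.
Proof. by rewrite (product_marginal t (fun b : bool => b%:R)) /= mulr1 mulr0 addr0. Qed.
End ProductOfCoins.

Section DimsumAnalysis.
Variables (R : rcfType) (m n : nat) (A : 'M[R]_(m, n)).
Local Notation triple := ('I_m * 'I_n * 'I_n)%type.

Local Notation elig t := ((eligible A t)%:R : R).

Lemma expected_shuffle_size_sum (gamma : R) :
  expected_shuffle_size gamma A
    = \sum_(t : triple) elig t * dimsum_p gamma A t.1.2 t.2.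
Proof.
pose coin (t : triple) (b : bool) : R :=
  if eligible A t then
    (let: (_, i, j) := t in
     if b then dimsum_p gamma A i j else 1 - dimsum_p gamma A i j)
  else (if b then 0 else 1).
have coin_sum1 t : coin t true + coin t false = 1.
  rewrite /coin; case: (eligible A t); last by rewrite add0r.
  by case: t => [[k i] j]; rewrite subrKC.
have size_sum (w : outcome m n) :
    (shuffle_size A w)%:R = \sum_(t : triple) elig t * (w t)%:R.
  rewrite /shuffle_size -sum1_card natr_sum big_mkcond /=.
  apply: eq_bigr => t _; rewrite inE.
  by case: (eligible A t); case: (w t); rewrite /= ?mulr1 ?mulr0.
rewrite /expected_shuffle_size.
under eq_bigr do rewrite size_sum mulr_sumr.
rewrite exchange_big /=; apply: eq_bigr => t _.
under eq_bigr do rewrite mulrCA.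
rewrite -mulr_sumr (product_coin_expectation coin_sum1).
by rewrite /coin; case: (eligible A t); case: t => [[k i] j]; rewrite ?mul0r.
Qed.

Lemma eligible_sym (k : 'I_m) (i j : 'I_n) :
  eligible A (k, i, j) = eligible A (k, j, i).
Proof. by rewrite /eligible eq_sym mulrC. Qed.

Lemma sum_eligible_swap (F : 'I_n -> R) :
  \sum_(t : triple) elig t * F t.2 = \sum_(t : triple) elig t * F t.1.2.
Proof.
pose swap (t : triple) := (t.1.1, t.2, t.1.2).
have swapK : involutive swap by case=> [[k i] j].
rewrite (reindex_inj (inv_inj swapK)) /=.
apply: eq_bigr => -[[k i] j] _.
by have /= -> := congr1 (fun b : bool => b%:R * F i) (eligible_sym k j i).
Qed.

Lemma colnorm_sqr (i : 'I_n) : colnorm A i ^+ 2 = \sum_k A k i ^+ 2.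
Proof. by rewrite /colnorm sqr_sqrtr // sumr_ge0 // => k _; apply: sqr_ge0. Qed.

Lemma colnorm_gt0 (i : 'I_n) : (exists k, A k i != 0) -> 0 < colnorm A i.
Proof.
case=> k nz; rewrite /colnorm sqrtr_gt0 (bigD1 k) //=.
have sq_gt0 : 0 < A k i ^+ 2 by rewrite lt0r sqrf_eq0 nz sqr_ge0.
by rewrite ltr_pwDl // sumr_ge0 // => l _; rewrite sqr_ge0.
Qed.

Lemma dimsum_p_le (gamma : R) (i j : 'I_n) :
  0 <= gamma -> 0 < colnorm A i -> 0 < colnorm A j ->
  dimsum_p gamma A i j
    <= gamma / 2 * (colnorm A i ^+ 2)^-1 + gamma / 2 * (colnorm A j ^+ 2)^-1.
Proof.
move=> g_ge0; set a := colnorm A i; set b := colnorm A j => a_gt0 b_gt0.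
apply: le_trans (_ : gamma / (a * b) <= _); first by rewrite ge_min lexx orbT.
have amgm (x y : R) : x * y <= (x ^+ 2 + y ^+ 2) / 2.
  have := sqr_ge0 (x - y); lra.
rewrite -mulrDr -mulrA ler_wpM2l // invfM -!exprVn.
by apply: le_trans (amgm _ _) _; rewrite mulrC.
Qed.

Definition column_emissions (i : 'I_n) : R := \sum_k \sum_j elig (k, i, j).

Lemma sum_by_first_column (F : 'I_n -> R) :
  \sum_(t : triple) elig t * F t.1.2 = \sum_i column_emissions i * F i.
Proof.
rewrite /column_emissions.
under [RHS]eq_bigr do rewrite mulr_suml.
under [RHS]eq_bigr do under eq_bigr do rewrite mulr_suml.
rewrite [RHS]exchange_big /= pair_big /= pair_big /=.
by apply: eq_bigr => -[[k i] j].
Qed.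

Lemma expected_shuffle_size_le_columns (gamma : R) :
  0 <= gamma -> (forall i, exists k, A k i != 0) ->
  expected_shuffle_size gamma A
    <= gamma * \sum_i column_emissions i * (colnorm A i ^+ 2)^-1.
Proof.
move=> g_ge0 col_nz; pose w i := (colnorm A i ^+ 2)^-1.
rewrite expected_shuffle_size_sum -sum_by_first_column mulr_sumr.
apply: le_trans (_ : \sum_t elig t * (gamma / 2 * w t.1.2 + gamma / 2 * w t.2) <= _).
  apply: ler_sum => t _; apply: ler_wpM2l; first exact: ler0n.
  exact: dimsum_p_le g_ge0 (colnorm_gt0 (col_nz _)) (colnorm_gt0 (col_nz _)).
under eq_bigr do rewrite mulrDr.
rewrite big_split /= (sum_eligible_swap (fun j => gamma / 2 * w j)) -big_split /=.
by apply: ler_sum => t _; rewrite -mulrDr -mulrDl -splitr mulrCA.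
Qed.

Lemma colnorm_sqr_ge (H : R) (i : 'I_n) :
  0 <= H -> (forall k, A k i != 0 -> H <= `|A k i|) ->
  H ^+ 2 * \sum_k ((A k i != 0)%:R : R) <= colnorm A i ^+ 2.
Proof.
move=> H_ge0 H_min; rewrite colnorm_sqr mulr_sumr; apply: ler_sum => k _.
have [->|nz] := eqVneq (A k i) 0; first by rewrite mulr0 sqr_ge0.
by rewrite /= mulr1 -[A k i ^+ 2]real_normK ?num_real // lerXn2r ?nnegrE ?H_min.
Qed.

(* Step 3b: an eligible triple needs two nonzero entries in its row, so a
   row with at most L nonzeros yields at most L triples for each column i,
   and none when a_ki = 0. *)
Lemma row_eligible_count (L : nat) (k : 'I_m) (i : 'I_n) :
  (#|[set j | A k j != 0%R]| <= L)%N ->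
  \sum_j elig (k, i, j) <= (A k i != 0)%:R * L%:R.
Proof.
move=> rowL; have [z|nz] := eqVneq (A k i) 0.
  by rewrite big1 ?mul0r // => j _; rewrite /eligible z mul0r eqxx andbF.
rewrite /= mul1r -natr_sum ler_nat; apply: leq_trans rowL.
rewrite -sum1_card [X in (_ <= X)%N]big_mkcond /=; apply: leq_sum => j _.
rewrite inE /eligible; have [->|_] := eqVneq (A k j) 0.
  by rewrite mulr0 eqxx andbF.
exact: leq_b1.
Qed.

Lemma column_emissions_bound (L : nat) (H : R) (i : 'I_n) :
  0 < H -> (forall k, (#|[set j | A k j != 0%R]| <= L)%N) ->
  (forall k, A k i != 0 -> H <= `|A k i|) -> (exists k, A k i != 0) ->
  column_emissions i * (colnorm A i ^+ 2)^-1 <= L%:R / H ^+ 2.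
Proof.
move=> H_gt0 rowL H_min col_nz.
have c_gt0 : 0 < colnorm A i ^+ 2 by rewrite exprn_gt0 ?colnorm_gt0.
apply: le_trans (_ : (\sum_k (A k i != 0)%:R * L%:R) / colnorm A i ^+ 2 <= _).
  apply: ler_wpM2r; first by rewrite invr_ge0 ltW.
  by apply: ler_sum => k _; apply: row_eligible_count.
rewrite -mulr_suml ler_pdivrMr // mulrAC ler_pdivlMr ?exprn_gt0 // mulrC mulrA.
rewrite mulrC; apply: ler_wpM2l => //.
exact: colnorm_sqr_ge (ltW H_gt0) H_min.
Qed.
End DimsumAnalysis.

Theorem theorem4 (R : rcfType) (m n L : nat) (A : 'M[R]_(m, n))
    (gamma H : R) (hgamma : 0 < gamma)
    (hentries : forall k i, -1 <= A k i <= 1)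
    (hcol : forall i : 'I_n, exists k : 'I_m, A k i != 0)
    (hrow : forall k : 'I_m, (#|[set i : 'I_n | A k i != 0%R]| <= L)%N)
    (hH_min : forall k i, A k i != 0 -> H <= `|A k i|)
    (hH_att : exists k i, A k i != 0 /\ `|A k i| = H) :
  expected_shuffle_size gamma A <= gamma * n%:R * L%:R / H ^+ 2.
Proof.
have H_gt0 : 0 < H by case: hH_att => k [i [nz <-]]; rewrite normr_gt0.
apply: le_trans (expected_shuffle_size_le_columns (ltW hgamma) hcol) _.
apply: le_trans (_ : gamma * \sum_(i < n) L%:R / H ^+ 2 <= _).
  apply: ler_wpM2l; first exact: ltW.
  by apply: ler_sum => i _; apply: column_emissions_bound H_gt0 hrow (hH_min ^~ i) (hcol i).
by rewrite sumr_const card_ord -[_ *+ n]mulr_natr mulrA mulrAC mulrA.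
Qed.
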